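(* With $a,b,c,g_0,\boldsymbol\mu,k,h$ as below attached to a bounding triple $(W,g,V)\in BT_n$, one has $2k-a-b-h\ge0$.
   Context: $\mathbb{F}_q^\infty$ has basis $e_1,e_2,\dots$; $\mathbb{F}_q^n=\mathrm{span}\{e_1,\dots,e_n\}$; $GL_\infty(\mathbb{F}_q)=\varinjlim GL_n(\mathbb{F}_q)$ under $g\mapsto\operatorname{diag}(g,\mathrm{Id})$. A subspace is smooth if it contains $e_i$ for all large $i$. A bounding triple is $(W,g,V)$ with $W,V$ smooth, $g\in GL_\infty(\mathbb{F}_q)$ acting as identity on $V$, $g^T$ acting as identity on $W$; $BT_n$: those with $e_{n+1},e_{n+2},\dots\in V\cap W$. $GL_\infty(\mathbb{F}_q)$ acts by $x\cdot(W,g,V)=(x^{-T}W,xgx^{-1},xV)$. With $\langle e_i,e_j\rangle=\delta_{ij}$, $W^\perp=\{v:\langle W,v\rangle=0\}$, $V^\perp=\{w:\langle w,V\rangle=0\}$, put $a=\dim(W\cap V^\perp)$, $b=\dim(V\cap W^\perp)$, $c=$ rank of $\langle-,-\rangle$ on $(W\cap\mathbb{F}_q^n)\times(V\cap\mathbb{F}_q^n)$. Choose $x\in GL_n(\mathbb{F}_q)$ such that the $V$ and $W$ components of $x\cdot(W,g,V)$ contain $e_{n-c+1},e_{n-c+2},\dots$, and let $g_0=xgx^{-1}\in GL_{n-c}(\mathbb{F}_q)$. Let $\boldsymbol\mu$ be the type of $g_0$ in $GL_{n-c}(\mathbb{F}_q)$ (for each monic irreducible $r\ne t$, $\boldsymbol\mu(r)$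 is the partition whose number of parts equal to $i$ is the multiplicity of $r^i$ as an elementary divisor of $g_0$); $k$ is the number of parts of $\boldsymbol\mu(t-1)$ and $h$ the number of parts of $\boldsymbol\mu(t-1)$ equal to $1$. *)

From HB Require Import structures.
From mathcomp Require Import all_boot all_order all_algebra.
Set Implicit Arguments. Unset Strict Implicit. Unset Printing Implicit Defensive.
Import GRing.Theory.
Local Open Scope ring_scope.

(* Conventions: vectors of F^n are row vectors 'rV[F]_n; a subspace of F^n is
   the row space of a square matrix (mxalgebra).  The column-vector action
   v |-> g v of the paper is v |-> v *m g^T on row vectors, and the pairing
   <w,v> is w *m v^T. *)

Section Defs.
Variable F : fieldType.

(* a = dim (W ∩ V^perp),  b = dim (V ∩ W^perp),  c = rank of <-,-> on W x V *)
Definition bt_a n (W V : 'M[F]_n) : nat := \rank (W :&: kermx V^T)%MS.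
Definition bt_b n (W V : 'M[F]_n) : nat := \rank (V :&: kermx W^T)%MS.
Definition bt_c n (W V : 'M[F]_n) : nat := \rank (W *m V^T).

Definition bt_g0 n (c : nat) (x g : 'M[F]_n) : 'M[F]_(n - c) :=
  \matrix_(i < n - c, j < n - c)
     (x *m g *m invmx x) (widen_ord (leq_subr c n) i) (widen_ord (leq_subr c n) j).

Fixpoint blkdiag_companion (s : seq {poly F}) : {d : nat & 'M[F]_d} :=
  match s with
  | [::] => existT (fun d => 'M[F]_d) 0%N (0 : 'M[F]_0)
  | p :: s' =>
      let D := blkdiag_companion s' in
      existT (fun d => 'M[F]_d) ((size p).-1 + projT1 D)%N
        (block_mx (companionmx p) 0 0 (projT2 D))
  end.

(* [s] is a list of elementary divisors of A : each entry (r, i) stands for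
   the elementary divisor r^i (r monic irreducible, i >= 1), and A is similar
   to the block diagonal sum of the companion matrices of the r^i. *)
Definition elementary_divisors m (A : 'M[F]_m) (s : seq ({poly F} * nat)) : Prop :=
  (forall ri, ri \in s -> [/\ ri.1 \is monic, irreducible_poly ri.1 & (0 < ri.2)%N])
  /\ let D := blkdiag_companion [seq ri.1 ^+ ri.2 | ri <- s] in
     exists (P : 'M[F]_(m, projT1 D)) (Q : 'M[F]_(projT1 D, m)),
       [/\ P *m Q = 1%:M, Q *m P = 1%:M & A = P *m projT2 D *m Q].

(* k = number of parts of mu(t-1),  h = number of parts of mu(t-1) equal to 1 *)
Definition type_k (s : seq ({poly F} * nat)) : nat :=
  count (fun ri => ri.1 == 'X - 1) s.
Definition type_h (s : seq ({poly F} * nat)) : nat :=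
  count (fun ri => (ri.1 == 'X - 1) && (ri.2 == 1%N)) s.

End Defs.

From HB Require Import structures.
From mathcomp Require Import all_boot all_order all_algebra all_fingroup all_field.
From mathcomp Require Import zify.
Set Implicit Arguments. Unset Strict Implicit. Unset Printing Implicit Defensive.
Import GRing.Theory.
Local Open Scope ring_scope.

(* Both a + b + c and h - 2k are compared with rho := rank (g - 1)^2.
   As g - 1 kills W and (g - 1)^T kills V, rho <= n - a - b - c.
   Conversely rho is at least the corresponding rank for g_0, a corner of a
   conjugate of g along whose complement g - 1 vanishes.  In the rational
   canonical form of g_0 each block C(r^i) with r <> t - 1 has C - 1
   invertible, and every other block has corank at most 1 for C - 1, hence
   at most 2 for (C - 1)^2, and 1 when it is the 1x1 block of t - 1; so
   n - c + h <= rho + 2k. *)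

Section CompanionRank.
Variable F : fieldType.

Lemma mxrank_mxsub m n m' n' (f : 'I_m' -> 'I_m) (g : 'I_n' -> 'I_n)
    (A : 'M[F]_(m, n)) :
  (\rank (mxsub f g A) <= \rank A)%N.
Proof.
rewrite mxsubrc; apply: leq_trans (mxrankS (rowsub_sub _ _)) _.
by rewrite -[A in colsub _ A]mulmx1 -mulmx_colsub mxrankM_maxl.
Qed.

(* Deleting the last row and the first column leaves a unit triangular matrix. *)
Lemma mxrank_shift_subr d (a : F) (X : 'M[F]_d) :
  (forall i j : 'I_d, (i.+1 < d)%N -> X i j = (i.+1 == j)%:R - a * (i == j)%:R) ->
  (d.-1 <= \rank X)%N.
Proof.
case: d X => [|d] X XE //=.
pose S : 'M[F]_d := mxsub (widen_ord (leqnSn d)) (lift ord0) X.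
apply: leq_trans (mxrank_mxsub (widen_ord (leqnSn d)) (lift ord0) X).
have SE (i j : 'I_d) : S i j = (i == j)%:R - a * (i == j.+1 :> nat)%:R.
  rewrite /S mxE XE /=; last by rewrite ltnS.
  by rewrite -!val_eqE /= /bump leq0n add1n eqSS.
have trig_S : is_trig_mx S.
  apply/is_trig_mxP => i j lt_ij; rewrite SE -val_eqE (ltn_eqF lt_ij).
  by rewrite (ltn_eqF (ltn_trans lt_ij (ltnSn _))) mulr0 subrr.
have : S \in unitmx.
  rewrite unitmxE (det_trig trig_S) big1 ?unitr1 // => i _.
  by rewrite SE eqxx eq_sym (gtn_eqF (ltnSn _)) mulr0 subr0.
by move/mxrank_unit ->.
Qed.

Lemma mxrank_companionmx_subr (p : {poly F}) (a : F) :
  ((size p).-1.-1 <= \rank ((companionmx p - a%:M)%R))%N.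
Proof.
apply: (mxrank_shift_subr (a := a)) => i j lt_i; rewrite !mxE mulr_natr.
rewrite (@ltn_eqF i (size p).-1.-1) //.
by rewrite -ltnS prednK ?lt_i // (leq_ltn_trans _ lt_i).
Qed.

Lemma companionmx_subr1_unit (r : {poly F}) (i : nat) :
  r \is monic -> irreducible_poly r -> r != 'X - 1 ->
  companionmx (r ^+ i) - 1%:M \in unitmx.
Proof.
move=> mon_r irr_r neq_r; set C := companionmx (r ^+ i).
apply/negPn/negP => nonunit.
have : eigenvalue C 1.
  rewrite /eigenvalue /eigenspace; apply/negP => /eqP ker0.
  move: nonunit; rewrite -row_free_unit /row_free.
  have := mxrank_ker (C - 1%:M); rewrite ker0 mxrank0 => /esym/eqP.
  by rewrite subn_eq0 eqn_leq rank_leq_row => ->.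
rewrite eigenvalue_root_char /C companionmxK ?monic_exp //.
rewrite /root horner_exp expf_eq0 => /andP[_ root_r1].
have : 'X - 1%:P %| r by rewrite dvdp_XsubCl.
case/(irredp_XsubCP irr_r) => [/eqp_size|].
  by rewrite size_XsubC size_poly1.
rewrite eqp_monic ?monicXsubC // => /eqP r_eq.
by move: neq_r; rewrite -r_eq polyC1 eqxx.
Qed.

Lemma companion_block_rank (r : {poly F}) (i : nat) :
  r \is monic -> irreducible_poly r -> (0 < i)%N ->
  ((size (r ^+ i)).-1 + ((r == ('X - 1)%R) && (i == 1%N))
    <= \rank (((companionmx (r ^+ i) - 1%:M) *m (companionmx (r ^+ i) - 1%:M))%R)
       + 2 * (r == ('X - 1)%R))%N.
Proof.
move=> mon_r irr_r i_gt0.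
have [r_eq|r_neq] := eqVneq r ('X - 1); last first.
  by rewrite /= mxrank_unit ?unitmx_mul ?companionmx_subr1_unit //; lia.
have [->|i_neq1] := eqVneq i 1%N.
  have size_r : size r = 2%N by rewrite r_eq -polyC1 size_XsubC.
  rewrite expr1 /=; apply: (@leq_trans 2%N).
    by rewrite size_r.
  exact: leq_addl.
have := mxrank_companionmx_subr (r ^+ i) 1.
have := mxrank_mul_min (companionmx (r ^+ i) - 1%:M) (companionmx (r ^+ i) - 1%:M).
rewrite /=; move: (\rank ((companionmx (r ^+ i) - 1%:M)%R)) (\rank ((_ *m _)%R)).
by move=> rC rC2; lia.
Qed.

Lemma blkdiag_companion_rank (s : seq ({poly F} * nat)) :
  (forall ri, ri \in s -> [/\ ri.1 \is monic, irreducible_poly ri.1 & (0 < ri.2)%N]) ->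
  let D := projT2 (blkdiag_companion [seq ri.1 ^+ ri.2 | ri <- s]) in
  (projT1 (blkdiag_companion [seq ri.1 ^+ ri.2 | ri <- s]) + type_h s
    <= \rank (((D - 1%:M) *m (D - 1%:M))%R) + 2 * type_k s)%N.
Proof.
elim: s => [|[r i] s IHs] s_ok /=; first by rewrite addn0.
have [mon_r irr_r i_gt0] := s_ok (r, i) (mem_head _ _).
have := IHs (fun ri ri_s => s_ok ri ltac:(by rewrite inE ri_s orbT)); rewrite /=.
set D := projT2 _ => IH.
rewrite scalar_mx_block opp_block_mx add_block_mx !oppr0 !addr0.
rewrite mulmx_block !mulmx0 !mul0mx !addr0 !add0r rank_diag_block_mx.
have := companion_block_rank mon_r irr_r i_gt0; move: IH => /=.
move: (\rank (((D - _) *m _)%R)) (\rank (((companionmx _ - _) *m _)%R)) => rD rC.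
by case: (r == _); case: (i == _); rewrite /=; lia.
Qed.

Lemma elementary_divisors_rank m (A : 'M[F]_m) (s : seq ({poly F} * nat)) :
  elementary_divisors A s ->
  (m + type_h s <= \rank (((A - 1%:M) *m (A - 1%:M))%R) + 2 * type_k s)%N.
Proof.
move=> [s_ok [P [Q [PQ QP A_eq]]]].
have := blkdiag_companion_rank s_ok; rewrite /=.
set D := projT2 _ => D_rank.
have m_le : (m <= projT1 (blkdiag_companion [seq ri.1 ^+ ri.2 | ri <- s]))%N.
  rewrite -[m in (m <= _)%N](mxrank1 F m) -PQ.
  exact: leq_trans (mxrankM_maxr _ _) (rank_leq_row _).
have A_sub1 : A - 1%:M = P *m (D - 1%:M) *m Q.
  by rewrite mulmxBr mulmxBl mulmx1 PQ A_eq.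
have D_sqr : (D - 1%:M) *m (D - 1%:M) = Q *m ((A - 1%:M) *m (A - 1%:M)) *m P.
  rewrite A_sub1 !mulmxA QP mul1mx -(mulmxA (D - 1%:M) Q P) QP mulmx1.
  by rewrite -(mulmxA _ Q P) QP mulmx1.
have D_le_A : (\rank (((D - 1%:M) *m (D - 1%:M))%R)
                <= \rank (((A - 1%:M) *m (A - 1%:M))%R))%N.
  by rewrite D_sqr; exact: leq_trans (mxrankM_maxl _ _) (mxrankM_maxr _ _).
apply: leq_trans (leq_add m_le (leqnn _)) _; apply: leq_trans D_rank _.
by rewrite leq_add2r.
Qed.

End CompanionRank.

Section BoundingTriple.
Variables (F : fieldType) (n : nat) (W V g : 'M[F]_n).
Hypothesis gV : forall v : 'rV[F]_n, (v <= V)%MS -> v *m g^T = v.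
Hypothesis gW : forall w : 'rV[F]_n, (w <= W)%MS -> w *m g = w.

Lemma trmx_subr1 : (g - 1%:M)^T = g^T - 1%:M.
Proof. by rewrite linearB /= trmx1. Qed.

Lemma mulmx_subr1_eq0 : V *m (g - 1%:M)^T = 0.
Proof.
apply/row_matrixP => i; rewrite row_mul trmx_subr1 mulmxBr mulmx1 row0.
by rewrite (gV (row_sub i V)) subrr.
Qed.

(* (g - 1)^T lies in W^perp and vanishes on V, so rank (g - 1)^2 is at most
   dim W^perp - dim (V ∩ W^perp) = (n - a - c) - b. *)
Lemma bounding_triple_rank :
  (\rank (((g - 1%:M) *m (g - 1%:M))%R) + bt_a W V + bt_b W V + bt_c W V <= n)%N.
Proof.
set B := g - 1%:M; set K := kermx W^T.
have WB : W *m B = 0.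
  apply/row_matrixP => i; rewrite row_mul mulmxBr mulmx1 row0.
  by rewrite (gW (row_sub i W)) subrr.
have BK : (B^T <= K)%MS by rewrite sub_kermx -trmx_mul WB trmx0.
have rank_sqr : (\rank (B *m B) <= \rank (K *m B^T))%N.
  by rewrite -mxrank_tr trmx_mul; apply/mxrankS/submxMr.
have rank_K := mxrank_mul_ker K B^T.
have b_le : (bt_b W V <= \rank (K :&: kermx B^T))%N.
  apply: mxrankS; rewrite sub_capmx capmxSr /=.
  by apply: submx_trans (capmxSl _ _) _; rewrite sub_kermx mulmx_subr1_eq0.
have dim_K : \rank K = (n - \rank W)%N by rewrite mxrank_ker mxrank_tr.
have rank_W := mxrank_mul_ker W V^T.
have := rank_leq_col W; rewrite /bt_a /bt_c; lia.
Qed.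

Variable x : 'M[F]_n.
Hypothesis x_unit : x \in unitmx.

Lemma conjg_subr1 : x *m g *m invmx x - 1%:M = x *m (g - 1%:M) *m invmx x.
Proof. by rewrite mulmxBr mulmxBl mulmx1 mulmxV. Qed.

Lemma conjg_subr1_col_eq0 (j : 'I_n) : ((delta_mx 0 j : 'rV[F]_n) <= V *m x^T)%MS ->
  forall i, (x *m g *m invmx x - 1%:M) i j = 0.
Proof.
move=> /submxP[u e_j] i.
have : delta_mx 0 j *m (x *m g *m invmx x - 1%:M)^T = 0 :> 'rV[F]_n.
  rewrite e_j conjg_subr1 !trmx_mul !mulmxA -(mulmxA _ x^T) -trmx_mul mulVmx //.
  by rewrite trmx1 mulmx1 -(mulmxA u) mulmx_subr1_eq0 mulmx0 mul0mx.
by rewrite -rowE => /rowP /(_ i); rewrite !mxE.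
Qed.

(* The last c columns of x g x^-1 - 1 vanish, so the square of the corner
   g_0 - 1 is the corner of the square of x g x^-1 - 1. *)
Lemma bt_g0_rank (c : nat) :
  (forall j : 'I_n, (n - c <= j)%N -> ((delta_mx 0 j : 'rV[F]_n) <= V *m x^T)%MS) ->
  (\rank (((bt_g0 c x g - 1%:M) *m (bt_g0 c x g - 1%:M))%R)
    <= \rank (((g - 1%:M) *m (g - 1%:M))%R))%N.
Proof.
move=> xV; set N := x *m g *m invmx x - 1%:M.
set w := widen_ord (leq_subr c n).
have corner_sqr : (bt_g0 c x g - 1%:M) *m (bt_g0 c x g - 1%:M) = mxsub w w (N *m N).
  apply/matrixP => i j; rewrite !mxE (bigID (fun k : 'I_n => (k < n - c)%N)) /=.
  rewrite [X in _ = _ + X]big1 ?addr0; last first.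
    by move=> k; rewrite -leqNgt => /xV/conjg_subr1_col_eq0 ->; rewrite mul0r.
  by rewrite (big_ord_narrow (leq_subr c n)); apply: eq_bigr => k _; rewrite !mxE.
have N_sqr : N *m N = x *m ((g - 1%:M) *m (g - 1%:M)) *m invmx x.
  rewrite /N conjg_subr1 !mulmxA -(mulmxA _ (invmx x) x) mulVmx // mulmx1.
  by rewrite -!mulmxA.
rewrite corner_sqr; apply: leq_trans (mxrank_mxsub _ _ _) _.
by rewrite N_sqr; exact: leq_trans (mxrankM_maxl _ _) (mxrankM_maxr _ _).
Qed.

End BoundingTriple.

Theorem proposition5p5 (F : finFieldType) (n : nat) (W V g : 'M[F]_n) :
  g \in unitmx ->
  (* g acts as the identity on V *)
  (forall v : 'rV[F]_n, (v <= V)%MS -> v *m g^T = v) ->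
  (* g^T acts as the identity on W *)
  (forall w : 'rV[F]_n, (w <= W)%MS -> w *m g = w) ->
  forall x : 'M[F]_n, x \in unitmx ->
  (* x V and x^{-T} W contain e_{n-c+1}, ..., e_n *)
  (forall i : 'I_n, (n - bt_c W V <= i)%N ->
      ((delta_mx 0 i : 'rV[F]_n) <= V *m x^T)%MS /\ ((delta_mx 0 i : 'rV[F]_n) <= W *m invmx x)%MS) ->
  forall s : seq ({poly F} * nat),
  elementary_divisors (bt_g0 (bt_c W V) x g) s ->
  (bt_a W V + bt_b W V + type_h s <= 2 * type_k s)%N.
Proof.
move=> _ gV gW x x_unit xVW s g0_s.
have := elementary_divisors_rank g0_s.
have := bt_g0_rank gV x_unit (fun j j_ge => proj1 (xVW j j_ge)).
have := bounding_triple_rank gV gW.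
have := rank_leq_row (W *m V^T); rewrite -/(bt_c W V).
lia.
Qed.
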